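(* Let $\mathbf d=(d_1,\ldots,d_n)$ be a graphical degree sequence and let $H_1$ and $H_2$ be two edge-disjoint graphs on $[n]$. Suppose that $\mathbf d^{H_1}\preceq \mathbf d$ and that $uv\notin H_1\cup H_2$. Then \[ \mathbb P\big(uv\in \mathcal G(n,\mathbf d)\mid H_1^+, H_2^-\big)\le \frac{(d_u-d^{H_1}_u)(d_v-d^{H_1}_v)}{M-2e(H_1)}\cdot f(\mathbf d,H_1,H_2), \] \[ \mathbb P\big(uv\in \mathcal G(n,\mathbf d)\mid H_1^+, H_2^-\big)\ge \frac{(d_u-d^{H_1}_u)(d_v-d^{H_1}_v)}{M-2e(H_1)}\cdot g(\mathbf d,H_1,H_2), \] where \[ f(\mathbf d,H_1,H_2)=\left(1-\frac{3J(\mathbf d)+\Delta(8+d_u^{H_2}+d_v^{H_2})}{M-2e(H_1)}-\frac{2e(H_2)\Delta^2}{(M-2e(H_1))^2}+\frac{(d_v-d_v^{H_1})(d_u-d_u^{H_1})}{M-2e(H_1)}\right)^{-1}, \] \[ g(\mathbf d,H_1,H_2)=\left(1- \frac{2J(\mathbf d)+6\Delta+2\Delta(H_2)\Delta}{M-2e(H_1)} \right)\left(1+ \frac{(d_v-d_v^{H_1})(d_u-d_u^{H_1})}{M-2e(H_1)} \right)^{-1}. \]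
   Context: For a sequence $\mathbf d=(d_1,\ldots,d_n)$ of nonnegative integers, $\mathcal G(n,\mathbf d)$ denotes a uniformly random simple graph on vertex set $[n]$ in which vertex $i$ has degree $d_i$ for every $i$; $\mathbf d$ is graphical if at least one such graph exists. $\Delta=\max_i d_i$, $M=\sum_{i=1}^n d_i$, and $J(\mathbf d)$ is the sum of the $\Delta$ largest entries of $\mathbf d$ (i.e. if $d_1\ge d_2\ge\cdots\ge d_n$, then $J(\mathbf d)=\sum_{i=1}^{\Delta}d_i$). For a graph $H$ on $[n]$, $e(H)$ is its number of edges, $\Delta(H)$ its maximum degree, and $d^H_i$ the degree of vertex $i$ in $H$; $\mathbf d^H=(d^H_1,\dots,d^H_n)$, and $\mathbf d^H\preceq\mathbf d$ means $d^H_i\le d_i$ for all $i$. Graphs on $[n]$ are identified with their edge sets; two such graphs are disjoint if their edge sets are disjoint. $H^+$ denotes the event $H\subseteq\mathcal G(n,\mathbf d)$, and $H^-$ denotes the event that $\mathcal G(n,\mathbf d)$ contains no edge of $H$.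
   Formalization: The upper bound by the product with f(d,H₁,H₂) is asserted only when the bracket whose inverse defines f is positive. The statement above fails without it. *)

(* Graphs on [n] = 'I_n are identified with their edge sets:
   a graph is a set of 2-element subsets of 'I_n. *)
From mathcomp Require Import all_boot all_order all_algebra.
Set Implicit Arguments. Unset Strict Implicit. Unset Printing Implicit Defensive.
Import Order.TTheory GRing.Theory Num.Theory.

Section Graphs.
Variable n : nat.

Definition simple_graph (G : {set {set 'I_n}}) : bool := [forall e in G, #|e| == 2].

Definition deg (G : {set {set 'I_n}}) (i : 'I_n) : nat := #|[set e in G | i \in e]|.

Definition nedges (G : {set {set 'I_n}}) : nat := #|G|.

Definition maxdeg (G : {set {set 'I_n}}) : nat := \max_(i : 'I_n) deg G i.

Definition sumd (d : 'I_n -> nat) : nat := \sum_(i : 'I_n) d i.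

Definition maxd (d : 'I_n -> nat) : nat := \max_(i : 'I_n) d i.

Definition Jd (d : 'I_n -> nat) : nat :=
  \sum_(k < maxd d) nth 0 (sort geq [seq d i | i <- enum 'I_n]) k.

Definition degseq_graphs (d : 'I_n -> nat) : {set {set {set 'I_n}}} :=
  [set G : {set {set 'I_n}} | simple_graph G && [forall i, deg G i == d i]].

Definition graphical (d : 'I_n -> nat) : bool := degseq_graphs d != set0.

Definition cond_event (d : 'I_n -> nat) (H1 H2 : {set {set 'I_n}}) :
  {set {set {set 'I_n}}} :=
  [set G in degseq_graphs d | (H1 \subset G) && [disjoint H2 & G]].

(* P( uv in G(n,d) | H1^+, H2^- ) for the uniform distribution on degseq_graphs d *)
Definition cond_prob_edge (R : realFieldType) (d : 'I_n -> nat)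
  (H1 H2 : {set {set 'I_n}}) (u v : 'I_n) : R :=
  (#|[set G in cond_event d H1 H2 | [set u; v] \in G]|)%:R
    / (#|cond_event d H1 H2|)%:R.

End Graphs.

From mathcomp Require Import all_boot all_order all_algebra.
From mathcomp Require Import ring lra.
Import Order.TTheory GRing.Theory Num.Theory.
Set Implicit Arguments. Unset Strict Implicit. Unset Printing Implicit Defensive.

(* Let S1 and S0 be the graphs of the conditional space that contain and avoid uv, so that
   the probability is |S1| / (|S0| + |S1|). Every such graph has M' = M - 2e(H1) ordered free
   edges (edges outside H1), and w has r_w = d_w - d^{H1}_w free neighbours.
   Switching uv, xy for ux, vy maps S1 to S0. It is available for every ordered free edge xy
   except when x or y is blocked (a loop, an existing edge or an edge of H2 would appear),
   which excludes at most b_w = Delta + J + d^{H2}_w Delta of them per endpoint w, and the image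
   remembers (x, y) as a pair of free neighbours of u and v. Double counting gives
   |S1| M' <= |S0| r_u r_v + |S1| (b_u + b_v).
   Switching ux, vy, ab for uv, xa, yb maps S0 to S1 in the same way and gives
   |S0| r_u r_v M' <= |S1| M'^2 + |S0| r_u r_v 2 (Delta + J + Delta(H2) Delta).
   Both inequalities rearrange into the two bounds. *)

Lemma sumn_subseq_sorted (s t : seq nat) :
  sorted geq s -> subseq t s -> sumn t <= sumn (take (size t) s).
Proof.
have geq_trans : transitive geq by move=> a b c /= ba cb; apply: leq_trans cb ba.
elim: s t => [|m s IHs] [|y t] //= srt_ms.
have srt_s := path_sorted srt_ms.
have /allP le_m := order_path_min geq_trans srt_ms.
case: eqP => [-> sub_ts | _ sub_yts]; first by rewrite leq_add2l IHs.
apply: leq_add; first exact/le_m/(mem_subseq sub_yts)/mem_head.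
exact/IHs/(subseq_trans (subseq_cons t y)).
Qed.

Lemma sumn_take_nth (s : seq nat) k : sumn (take k s) = \sum_(i < k) nth 0 s i.
Proof.
elim: s k => [|a s IHs] [|k]; rewrite ?big_ord0 //=.
  by rewrite big1 // => i _; rewrite nth_nil.
by rewrite big_ord_recl IHs.
Qed.

Lemma sum_le_Jd n (d : 'I_n -> nat) (S : {set 'I_n}) :
  #|S| <= maxd d -> \sum_(i in S) d i <= Jd d.
Proof.
move=> leS; rewrite /Jd -sumn_take_nth; set s := sort geq _.
have srt_s : sorted geq s by apply: sort_sorted => a b; apply: leq_total.
have [t sub_ts perm_t] : exists2 t, subseq t s & perm_eq [seq d i | i <- enum S] t.
  apply/count_subseqP => k; rewrite (permP (permEl (perm_sort _ _))).
  by apply/leq_count_subseq/map_subseq; rewrite enumT filter_subseq.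
have -> : \sum_(i in S) d i = sumn t by rewrite -(perm_sumn perm_t) sumnE big_map big_enum.
apply: leq_trans (sumn_subseq_sorted srt_s sub_ts) _.
rewrite -(perm_size perm_t) size_map -cardE.
by rewrite -[take (maxd d) s](cat_take_drop #|S|) take_takel // sumn_cat leq_addr.
Qed.

Lemma card_dep_pairs (I J : finType) (A : {set I}) (B : I -> {set J}) :
  #|[set p : I * J | (p.1 \in A) && (p.2 \in B p.1)]| = \sum_(i in A) #|B i|.
Proof.
rewrite -sum1dep_card -(pair_big_dep (mem A) (fun i => mem (B i)) (fun _ _ => 1)) /=.
by apply: eq_bigr => i _; rewrite sum1_card.
Qed.

Lemma leq_sum_setU (T : finType) (A B : {set T}) (F : T -> nat) :
  \sum_(t in A :|: B) F t <= \sum_(t in A) F t + \sum_(t in B) F t.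
Proof.
rewrite !(big_mkcond (fun t => t \in _)) -big_split /=; apply: leq_sum => t _.
by rewrite in_setU; case: (t \in A); case: (t \in B); rewrite ?leq_addr ?leq_addl.
Qed.

Lemma disjoint_setU (T : finType) (A B C : {set T}) :
  [disjoint A :|: B & C] = [disjoint A & C] && [disjoint B & C].
Proof. by rewrite -disjointU; apply: eq_disjoint => x; rewrite !inE. Qed.

Section Graphs.
Variable n : nat.
Local Notation V := 'I_n.
Local Notation graph := {set {set V}}.
Implicit Types (G K R A : graph) (X : {set V}).

Definition nbr K (x : V) : {set V} := [set y | [set x; y] \in K].

Lemma in_nbr K (x y : V) : (y \in nbr K x) = ([set x; y] \in K).
Proof. by rewrite inE. Qed.

Definition arcs K : {set V * V} := [set p | [set p.1; p.2] \in K].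

Lemma in_arcs K (p : V * V) : (p \in arcs K) = ([set p.1; p.2] \in K).
Proof. by rewrite inE. Qed.

Definition switch G R A : graph := (G :\: R) :|: A.

Lemma set2_eq_cases (a b c e : V) :
  [set a; b] = [set c; e] -> (a = c /\ b = e) \/ (a = e /\ b = c).
Proof.
move=> eq_ab_ce.
have ha : a \in [set c; e] by rewrite -eq_ab_ce set21.
have hb : b \in [set c; e] by rewrite -eq_ab_ce set22.
have hc : c \in [set a; b] by rewrite eq_ab_ce set21.
have he : e \in [set a; b] by rewrite eq_ab_ce set22.
by move: ha hb hc he => /set2P[]-> /set2P[]-> /set2P[] ? /set2P[] ?; subst; tauto.
Qed.

Lemma set2_neq (x y : V) (e : {set V}) : x \notin e -> [set x; y] != e.
Proof. by apply: contraNneq => <-; rewrite set21. Qed.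

Lemma nat_in_set2 (a b i : V) : a != b -> (i \in [set a; b]) = (i == a) + (i == b) :> nat.
Proof. by rewrite in_set2; case: (i =P a) => [-> /negbTE->|]. Qed.

Lemma simple_graph_card K e : simple_graph K -> e \in K -> #|e| = 2.
Proof. by move=> /forall_inP simK /simK /eqP. Qed.

Lemma simple_graph_subset G K : K \subset G -> simple_graph G -> simple_graph K.
Proof. by move=> /subsetP KG /forall_inP simG; apply/forall_inP => e /KG /simG. Qed.

Lemma simple_edge_neq K (x y : V) : simple_graph K -> [set x; y] \in K -> x != y.
Proof.
by move=> simK /(simple_graph_card simK); apply: contra_eqN => /eqP->; rewrite setUid cards1.
Qed.

Lemma degE K (i : V) : deg K i = \sum_(e in K) (i \in e).
Proof. by rewrite /deg -sum1dep_card big_mkcondr. Qed.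

Lemma deg_uniq_seq (s : seq {set V}) (i : V) :
  uniq s -> deg [set e in s] i = count (fun e : {set V} => i \in e) s.
Proof.
move=> uniq_s; rewrite /deg -size_filter -(card_uniqP (filter_uniq _ uniq_s)) -cardsE.
by apply: eq_card => e; rewrite !inE mem_filter andbC.
Qed.

Lemma deg_set2 (e1 e2 : {set V}) i :
  e1 != e2 -> deg [set e1; e2] i = (i \in e1) + (i \in e2).
Proof.
move=> ne12; have -> : [set e1; e2] = [set e in [:: e1; e2]] by apply/setP => e; rewrite !inE.
by rewrite deg_uniq_seq /= ?addn0 // inE ne12.
Qed.

Lemma deg_set3 (e1 e2 e3 : {set V}) i : e1 != e2 -> e1 != e3 -> e2 != e3 ->
  deg [set e1; e2; e3] i = (i \in e1) + (i \in e2) + (i \in e3).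
Proof.
move=> ne12 ne13 ne23.
have -> : [set e1; e2; e3] = [set e in [:: e1; e2; e3]] by apply/setP => e; rewrite !inE orbA.
by rewrite deg_uniq_seq /= ?addn0 ?addnA // !inE negb_or ne12 ne13 ne23.
Qed.

Lemma leq_card_nbr K x : #|nbr K x| <= deg K x.
Proof.
rewrite -(card_in_imset (f := fun y => [set x; y])) => [|y1 y2 _ _ /set2_eq_cases].
  by apply/subset_leq_card/subsetP => e /imsetP[y]; rewrite !inE => xyK ->; rewrite xyK set21.
by case=> [] [] // *; congruence.
Qed.

Lemma card_nbr K x : simple_graph K -> #|nbr K x| = deg K x.
Proof.
move=> simK; apply/eqP; rewrite eqn_leq leq_card_nbr /=.
apply: leq_trans (leq_imset_card (fun y => [set x; y]) (nbr K x)).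
apply/subset_leq_card/subsetP => e; rewrite !inE => /andP[eK xe].
have /eqP/cards2P[a [b [_ e_ab]]] := simple_graph_card simK eK.
move: xe eK; rewrite e_ab => /set2P[] <- abK; apply/imsetP.
  by exists b; rewrite ?inE.
by exists a; rewrite ?inE setUC.
Qed.

Lemma sum_deg_simple K : simple_graph K -> \sum_(i : V) deg K i = 2 * #|K|.
Proof.
move=> simK; rewrite (eq_bigr _ (fun i _ => degE K i)) exchange_big /=.
rewrite -sum1_card big_distrr /=; apply: eq_bigr => e eK.
rewrite muln1 -(simple_graph_card simK eK) -sum1_card [RHS]big_mkcond.
by apply: eq_bigr => i _; case: (i \in e).
Qed.

Lemma card_arcs_from K X : simple_graph K ->
  #|[set p in arcs K | p.1 \in X]| = \sum_(x in X) deg K x.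
Proof.
move=> simK; rewrite -(eq_bigr _ (fun x _ => card_nbr x simK)) -card_dep_pairs.
by apply: eq_card => -[x y]; rewrite !inE andbC.
Qed.

Lemma card_arcs_to K X : simple_graph K ->
  #|[set p in arcs K | p.2 \in X]| = \sum_(x in X) deg K x.
Proof.
have swapK : involutive (fun p : V * V => (p.2, p.1)) by case.
move=> simK; rewrite -card_arcs_from // -(card_preimset _ (inv_inj swapK)).
by apply: eq_card => -[x y]; rewrite !inE /= setUC.
Qed.

Lemma card_arcs K : simple_graph K -> #|arcs K| = 2 * #|K|.
Proof.
move=> simK; have -> : arcs K = [set p in arcs K | p.1 \in [set: V]].
  by apply/setP => p; rewrite !inE andbT.
by rewrite card_arcs_from // -sum_deg_simple //; apply: eq_bigl => i; rewrite inE.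
Qed.

Lemma deg_setD G K i : K \subset G -> deg (G :\: K) i = deg G i - deg K i.
Proof. by move=> /setIidPr KG; rewrite !degE [in RHS](big_setID K) /= KG addKn. Qed.

Lemma deg_switch G R A i : R \subset G -> [disjoint A & G] ->
  deg (switch G R A) i + deg R i = deg G i + deg A i.
Proof.
move=> /subsetP RG AG; rewrite !degE !(big_mkcond (fun e => e \in _)) -!big_split /=.
apply: eq_bigr => e _; rewrite !inE.
case eA: (e \in A).
  have eG := disjointFr AG eA; have eR := contraFF (RG e) eG.
  by rewrite eG eR /= addn0.
by case eR: (e \in R); rewrite ?(RG e eR) /= ?addn0 ?orbF.
Qed.

Lemma switchK G R A : R \subset G -> [disjoint A & G] -> switch (switch G R A) A R = G.
Proof.
move=> /subsetP RG AG; apply/setP => e; rewrite !inE.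
case eR: (e \in R); first by rewrite orbT RG.
by case eA: (e \in A); rewrite ?(disjointFr AG eA) /= ?orbF.
Qed.

Lemma switching_count (I : finType) (S S' : {set graph}) (P Q : graph -> {set I})
    (R A : I -> graph) :
  (forall G i, G \in S -> i \in P G ->
    [/\ R i \subset G, [disjoint A i & G],
        switch G (R i) (A i) \in S' & i \in Q (switch G (R i) (A i))]) ->
  \sum_(G in S) #|P G| <= \sum_(G in S') #|Q G|.
Proof.
move=> switchP.
have sum_by_index (T : {set graph}) (F : graph -> {set I}) :
    \sum_(G in T) #|F G| = \sum_(i : I) #|[set G in T | i \in F G]|.
  under eq_bigr => G _ do rewrite -sum1_card.
  rewrite (exchange_big_dep xpredT) //=; apply: eq_bigr => i _.
  by rewrite sum1dep_card.
rewrite !sum_by_index; apply: leq_sum => i _.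
rewrite -(card_in_imset (f := fun G => switch G (R i) (A i))) => [|G1 G2].
  apply/subset_leq_card/subsetP => G' /imsetP[G]; rewrite inE => /andP[GS iP] ->.
  by have [_ _ G'S' iQ] := switchP G i GS iP; rewrite inE G'S' iQ.
rewrite !inE => /andP[G1S iP1] /andP[G2S iP2] eq_switch.
have [RG1 AG1 _ _] := switchP G1 i G1S iP1; have [RG2 AG2 _ _] := switchP G2 i G2S iP2.
by rewrite -(switchK RG1 AG1) eq_switch switchK.
Qed.

End Graphs.

Section Switchings.
Variables (n : nat) (d : 'I_n -> nat) (H1 H2 : {set {set 'I_n}}) (u v : 'I_n).
Hypotheses (neq_uv : u != v) (uv_notin_H1 : [set u; v] \notin H1)
  (uv_notin_H2 : [set u; v] \notin H2).
Local Notation V := 'I_n.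
Local Notation graph := {set {set V}}.
Local Notation S := (cond_event d H1 H2).
Local Notation Delta := (maxd d).
Local Notation J := (Jd d).
Implicit Types (G R A : graph) (x y w : V).

Definition free G : graph := G :\: H1.

Definition Mfree := sumd d - 2 * nedges H1.

Definition rdeg x := d x - deg H1 x.

Definition blocked G w : {set V} := w |: (nbr G w :|: nbr H2 w).

Definition blocked_bound w := Delta + J + deg H2 w * Delta.

Definition good_arcs G w w' : {set V * V} :=
  [set p in arcs (free G) | (p.1 \notin blocked G w) && (p.2 \notin blocked G w')].

Definition legs G : {set V * V} := setX (nbr (free G) u) (nbr (free G) v).

Lemma cond_eventP G : G \in S ->
  [/\ simple_graph G, forall i, deg G i = d i, H1 \subset G & [disjoint H2 & G]].
Proof.
by rewrite !inE => /andP[/andP[simG /forallP degG] /andP[H1G H2G]]; split=> // i; apply/eqP.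
Qed.

Lemma simple_free G : G \in S -> simple_graph (free G).
Proof. by case/cond_eventP=> simG _ _ _; apply: simple_graph_subset simG; apply: subsetDl. Qed.

Lemma deg_free G x : G \in S -> deg (free G) x = rdeg x.
Proof. by case/cond_eventP=> _ degG H1G _; rewrite deg_setD // degG. Qed.

Lemma leq_maxd x : d x <= Delta.
Proof. exact: leq_bigmax. Qed.

Lemma deg_free_le_maxd G x : G \in S -> deg (free G) x <= Delta.
Proof. by move=> GS; rewrite deg_free // (leq_trans (leq_subr _ _)) ?leq_maxd. Qed.

Lemma card_arcs_free G : G \in S -> #|arcs (free G)| = Mfree.
Proof.
move=> GS; have [simG degG H1G _] := cond_eventP GS.
have sumG : sumd d = 2 * #|G| by rewrite -sum_deg_simple //; apply: eq_bigr => i _.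
rewrite card_arcs ?simple_free // /Mfree /nedges sumG /free cardsD (setIidPr H1G).
by rewrite mulnBr.
Qed.

Lemma card_legs G : G \in S -> #|legs G| = rdeg u * rdeg v.
Proof. by move=> GS; rewrite cardsX !card_nbr ?simple_free // !deg_free. Qed.

Lemma sum_deg_free_blocked G w : G \in S ->
  \sum_(x in blocked G w) deg (free G) x <= blocked_bound w.
Proof.
move=> GS; have [simG degG _ _] := cond_eventP GS.
apply: leq_trans (leq_sum_setU _ _ _) _; rewrite big_set1 /blocked_bound -addnA.
apply: leq_add; first exact: deg_free_le_maxd.
apply: leq_trans (leq_sum_setU _ _ _) _; apply: leq_add.
  apply: leq_trans (sum_le_Jd _); first by apply: leq_sum => x _; rewrite deg_free ?leq_subr.
  by rewrite card_nbr // degG leq_maxd.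
apply: leq_trans (_ : \sum_(x in nbr H2 w) Delta <= _).
  by apply: leq_sum => x _; apply: deg_free_le_maxd.
by rewrite sum_nat_const leq_mul2r leq_card_nbr orbT.
Qed.

Lemma card_good_arcs G w w' : G \in S ->
  Mfree <= #|good_arcs G w w'| + blocked_bound w + blocked_bound w'.
Proof.
move=> GS; rewrite -(card_arcs_free GS) -addnA.
set B := [set p in arcs (free G) | p.1 \in blocked G w] :|:
         [set p in arcs (free G) | p.2 \in blocked G w'].
apply: leq_trans (_ : #|good_arcs G w w' :|: B| <= _).
  apply/subset_leq_card/subsetP => p; rewrite /good_arcs /B.
  move: (arcs _) (blocked G w) (blocked G w') => K B1 B2 pK; rewrite !inE pK /=.
  by case: (_ \in B1); case: (_ \in B2).
apply: leq_trans (leq_card_setU _ _).1 _; rewrite leq_add2l.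
apply: leq_trans (leq_card_setU _ _).1 _.
rewrite card_arcs_from ?card_arcs_to ?simple_free //.
by apply: leq_add; apply: sum_deg_free_blocked.
Qed.

Lemma switch_cond_event G R A : G \in S -> R \subset free G ->
  [disjoint A & G] -> [disjoint A & H2] -> simple_graph A ->
  (forall i, deg A i = deg R i) -> switch G R A \in S.
Proof.
move=> GS RK AG AH2 simA degA; have [simG degG H1G H2G] := cond_eventP GS.
have RG : R \subset G by apply: subset_trans RK (subsetDl _ _).
rewrite !inE -andbA; apply/and4P; split.
- apply/forall_inP => e; rewrite inE => /orP[/setDP[eG _] | eA].
    exact/eqP/(simple_graph_card simG).
  exact/eqP/(simple_graph_card simA).
- apply/forallP => i; apply/eqP/(@addIn (deg R i)); rewrite deg_switch // degA.
  by rewrite degG.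
- apply/subsetP => e eH1; rewrite !inE (subsetP H1G _ eH1) andbT.
  by apply/orP; left; apply: contraL eH1 => /(subsetP RK); rewrite inE => /andP[].
- rewrite disjoint_sym disjoint_setU AH2 andbT.
  by apply: disjointWl (subsetDl G R) _; rewrite disjoint_sym.
Qed.

Lemma free_switch G R A e : G \in S -> e \in A -> e \notin G -> e \in free (switch G R A).
Proof.
case/cond_eventP=> _ _ /subsetP H1G _ eA eG.
by rewrite !inE eA orbT andbT; apply: contra eG; apply: H1G.
Qed.

Definition S1 := [set G in S | [set u; v] \in G].
Definition S0 := [set G in S | [set u; v] \notin G].

Definition uv_out (p : V * V) : graph := [set [set u; v]; [set p.1; p.2]].
Definition uv_in (p : V * V) : graph := [set [set u; p.1]; [set v; p.2]].

Lemma deg_uv_in x y i : x \notin [set u; v] -> y \notin [set u; v] -> x != y ->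
  deg (uv_in (x, y)) i = deg (uv_out (x, y)) i.
Proof.
rewrite !inE !negb_or => /andP[xu xv] /andP[yu yv] xy.
rewrite !deg_set2 /=; last 2 first.
- by rewrite eq_sym set2_neq // !inE negb_or xu xv.
- by rewrite set2_neq // !inE negb_or neq_uv eq_sym yu.
have ux : u != x by rewrite eq_sym.
have vy : v != y by rewrite eq_sym.
by rewrite !nat_in_set2 // addnACA.
Qed.

Lemma uv_switch_valid G p : G \in S1 -> p \in good_arcs G u v ->
  [/\ uv_out p \subset G, [disjoint uv_in p & G],
      switch G (uv_out p) (uv_in p) \in S0 & p \in legs (switch G (uv_out p) (uv_in p))].
Proof.
case: p => x y S1G good_xy.
move: S1G => /[1!inE] /andP[GS uvG].
rewrite !inE /= !negb_or in good_xy.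
case/and3P: good_xy => /andP[xyH1 xyG] /and3P[xu uxG uxH2] /and3P[yv vyG vyH2].
have [simG _ _ _] := cond_eventP GS.
have xy := simple_edge_neq simG xyG.
have xv : x != v by apply: contraNneq uxG => ->.
have yu : y != u by apply: contraNneq vyG => ->; rewrite setUC.
have out_sub : uv_out (x, y) \subset G by apply/subsetP => e; rewrite !inE => /orP[]/eqP->.
have in_disj : [disjoint uv_in (x, y) & G] by rewrite disjoint_setU !disjoints1 uxG vyG.
have G'S : switch G (uv_out (x, y)) (uv_in (x, y)) \in S.
  apply: switch_cond_event => //.
  - by apply/subsetP => e; rewrite !inE => /orP[]/eqP->; rewrite ?uv_notin_H1 ?xyH1.
  - by rewrite disjoint_setU !disjoints1 uxH2 vyH2.
  - apply/forall_inP => e; rewrite !inE => /orP[]/eqP->.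
      by rewrite cards2 /= (eq_sym u) xu.
    by rewrite cards2 /= (eq_sym v) yv.
  - by move=> i; apply: deg_uv_in; rewrite // !inE negb_or ?xu ?xv ?yu ?yv.
split=> //.
  by rewrite inE G'S in_setU in_setD (disjointFl in_disj uvG) orbF !inE eqxx.
by rewrite in_setX /= !in_nbr !free_switch // !inE eqxx ?orbT.
Qed.

Lemma count_S1 : #|S1| * Mfree <=
  #|S0| * (rdeg u * rdeg v) + #|S1| * (blocked_bound u + blocked_bound v).
Proof.
rewrite -!sum_nat_const.
apply: leq_trans (_ : \sum_(G in S1)
    (#|good_arcs G u v| + (blocked_bound u + blocked_bound v)) <= _).
  by apply: leq_sum => G; rewrite inE => /andP[GS _]; rewrite addnA card_good_arcs.
rewrite big_split leq_add2r /=.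
rewrite [X in _ <= X](eq_bigr (fun G => #|legs G|)) => [|G]; last first.
  by rewrite inE => /andP[GS _]; rewrite card_legs.
by apply: (switching_count (R := uv_out) (A := uv_in)) => G p; apply: uv_switch_valid.
Qed.

Definition legs_arcs G : {set (V * V) * (V * V)} :=
  [set pq | (pq.1 \in legs G) && (pq.2 \in good_arcs G pq.1.1 pq.1.2)].

Definition transpose_pairs (pq : (V * V) * (V * V)) := ((pq.1.1, pq.2.1), (pq.1.2, pq.2.2)).

Definition arc_pairs G := transpose_pairs @^-1: setX (arcs (free G)) (arcs (free G)).

Definition uv_out3 (pq : (V * V) * (V * V)) : graph :=
  [set [set u; pq.1.1]; [set v; pq.1.2]; [set pq.2.1; pq.2.2]].
Definition uv_in3 (pq : (V * V) * (V * V)) : graph :=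
  [set [set u; v]; [set pq.1.1; pq.2.1]; [set pq.1.2; pq.2.2]].

Lemma deg_uv_in3 x y a b i :
  x \notin [set u; v; a; b] -> y \notin [set u; v; a; b] -> a != b ->
  deg (uv_in3 ((x, y), (a, b))) i = deg (uv_out3 ((x, y), (a, b))) i.
Proof.
rewrite !inE !negb_or => /andP[/andP[/andP[xu xv] xa] xb] /andP[/andP[/andP[yu yv] ya] yb] ab.
have ne_ux_vy : [set u; x] != [set v; y].
  by rewrite set2_neq // !inE negb_or neq_uv eq_sym yu.
have ne_ux_ab : [set u; x] != [set a; b] by rewrite setUC set2_neq // !inE negb_or xa xb.
have ne_vy_ab : [set v; y] != [set a; b] by rewrite setUC set2_neq // !inE negb_or ya yb.
have ne_uv_xa : [set u; v] != [set x; a] by rewrite eq_sym set2_neq // !inE negb_or xu xv.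
have ne_uv_yb : [set u; v] != [set y; b] by rewrite eq_sym set2_neq // !inE negb_or yu yv.
have ne_xa_yb : [set x; a] != [set y; b].
  by apply/negP => /eqP /set2_eq_cases [[_ eq_ab] | [eq_xb _]]; rewrite ?eq_ab ?eq_xb eqxx in ab xb.
have ux : u != x by rewrite eq_sym.
have vy : v != y by rewrite eq_sym.
by rewrite /= !deg_set3 // !nat_in_set2 //; ring.
Qed.

Lemma uv_switch3_valid G pq : G \in S0 -> pq \in legs_arcs G ->
  [/\ uv_out3 pq \subset G, [disjoint uv_in3 pq & G],
      switch G (uv_out3 pq) (uv_in3 pq) \in S1
    & pq \in arc_pairs (switch G (uv_out3 pq) (uv_in3 pq))].
Proof.
case: pq => -[x y] [a b] S0G legs_arcs_pq.
move: S0G => /[1!inE] /andP[GS uvG].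
rewrite !inE /= !negb_or in legs_arcs_pq.
case/andP: legs_arcs_pq => /andP[/andP[uxH1 uxG] /andP[vyH1 vyG]].
case/and3P=> /andP[abH1 abG] /and3P[ax xaG xaH2] /and3P[b_y ybG ybH2].
have [simG _ _ _] := cond_eventP GS.
have ux := simple_edge_neq simG uxG; have vy := simple_edge_neq simG vyG.
have ab := simple_edge_neq simG abG.
have xv : x != v by apply: contraNneq uvG => <-.
have yu : y != u by apply: contraNneq uvG => <-; rewrite setUC.
have xb : x != b by apply: contraNneq xaG => ->; rewrite setUC.
have ya : y != a by apply: contraNneq ybG => ->.
have out_sub : uv_out3 ((x, y), (a, b)) \subset G.
  by apply/subsetP => e; rewrite !inE => /orP[/orP[]|]/eqP->.
have in_disj : [disjoint uv_in3 ((x, y), (a, b)) & G].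
  by rewrite !disjoint_setU !disjoints1 uvG xaG ybG.
have G'S : switch G (uv_out3 ((x, y), (a, b))) (uv_in3 ((x, y), (a, b))) \in S.
  apply: switch_cond_event => //.
  - by apply/subsetP => e; rewrite !inE => /orP[/orP[]|]/eqP->; rewrite ?uxH1 ?vyH1 ?abH1.
  - by rewrite !disjoint_setU !disjoints1 uv_notin_H2 xaH2 ybH2.
  - apply/forall_inP => e; rewrite !inE => /orP[/orP[]|]/eqP->; rewrite cards2 /= ?neq_uv //.
      by rewrite (eq_sym x) ax.
    by rewrite (eq_sym y) b_y.
  - move=> i; apply: deg_uv_in3 => //; rewrite !inE !negb_or.
      by rewrite (eq_sym x u) ux xv (eq_sym x a) ax xb.
    by rewrite yu (eq_sym y v) vy ya (eq_sym y b) b_y.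
split=> //; first by rewrite inE G'S in_setU orbC !inE eqxx.
by rewrite inE /= in_setX !in_arcs /= !free_switch // !inE eqxx ?orbT.
Qed.

Definition max_blocked_bound := Delta + J + maxdeg H2 * Delta.

Lemma card_legs_arcs G : G \in S ->
  rdeg u * rdeg v * Mfree <= #|legs_arcs G| + rdeg u * rdeg v * (2 * max_blocked_bound).
Proof.
move=> GS; rewrite -(card_legs GS) -!sum_nat_const.
rewrite (card_dep_pairs _ (fun p => good_arcs G p.1 p.2)) -big_split /=.
apply: leq_sum => -[x y] _; apply: leq_trans (card_good_arcs x y GS) _.
rewrite -addnA leq_add2l mul2n -addnn.
by apply: leq_add; rewrite leq_add2l leq_mul2r leq_bigmax orbT.
Qed.

Lemma card_arc_pairs G : G \in S -> #|arc_pairs G| = Mfree * Mfree.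
Proof.
move=> GS; rewrite card_preimset ?cardsX ?card_arcs_free //.
by apply: inv_inj => -[[x y] [a b]].
Qed.

Lemma count_S0 : #|S0| * (rdeg u * rdeg v * Mfree) <=
  #|S1| * (Mfree * Mfree) + #|S0| * (rdeg u * rdeg v * (2 * max_blocked_bound)).
Proof.
rewrite -!sum_nat_const.
apply: leq_trans (_ : \sum_(G in S0) (#|legs_arcs G| +
    rdeg u * rdeg v * (2 * max_blocked_bound)) <= _).
  by apply: leq_sum => G; rewrite inE => /andP[GS _]; apply: card_legs_arcs.
rewrite big_split leq_add2r /=.
rewrite [X in _ <= X](eq_bigr (fun G => #|arc_pairs G|)) => [|G]; last first.
  by rewrite inE => /andP[GS _]; rewrite card_arc_pairs.
by apply: (switching_count (R := uv_out3) (A := uv_in3)) => G pq; apply: uv_switch3_valid.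
Qed.

Lemma Mfree_gt0 : 0 < #|S1| -> 0 < Mfree.
Proof.
case/card_gt0P=> G; rewrite inE => /andP[GS uvG].
by rewrite -(card_arcs_free GS); apply/card_gt0P; exists (u, v); rewrite !inE uv_notin_H1.
Qed.

Lemma card_S : #|S| = #|S0| + #|S1|.
Proof.
rewrite addnC -(cardsID [set G : graph | [set u; v] \in G]); congr (_ + _); apply: eq_card => G.
  by rewrite !inE andbC.
by rewrite !inE andbC.
Qed.

Lemma double_nedges_le_sumd : S != set0 -> 2 * nedges H1 <= sumd d.
Proof.
case/set0Pn=> G GS; have [simG degG H1G _] := cond_eventP GS.
rewrite /sumd -(eq_bigr _ (fun i _ => degG i)) sum_deg_simple // leq_mul2l.
by rewrite subset_leq_card.
Qed.

End Switchings.

Local Open Scope ring_scope.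

Lemma switching_ratio_upper (R : realFieldType) (s0 s1 a m b : nat) (T E : R) :
  (0 < s0 + s1)%N -> (0 < s1 -> 0 < m)%N -> (s1 * m <= s0 * a + s1 * b)%N ->
  b%:R <= T -> 0 <= E -> 0 < 1 - T / m%:R - E / m%:R ^+ 2 + a%:R / m%:R ->
  s1%:R / (s0 + s1)%:R <= a%:R / m%:R * (1 - T / m%:R - E / m%:R ^+ 2 + a%:R / m%:R)^-1.
Proof.
move=> s_gt0 m_gt0 count_le le_bT E_ge0.
have [m0 _ | m_pos] := posnP m.
  have -> : s1 = 0%N by case: s1 m_gt0 {count_le s_gt0} => // s1 /(_ isT); rewrite m0.
  by rewrite m0 invr0 !mulr0 !mul0r.
set f := _ + _ => f_gt0.
have {}count_le : s1%:R * m%:R <= s0%:R * a%:R + s1%:R * b%:R :> R.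
  by rewrite -!natrM -natrD ler_nat.
have m_gt0' : 0 < m%:R :> R by rewrite ltr0n.
have s_gt0' : 0 < s0%:R + s1%:R :> R by rewrite -natrD ltr0n.
have mf : m%:R * f = m%:R - T - E / m%:R + a%:R by rewrite /f; field; lra.
have Em_ge0 : 0 <= E / m%:R by rewrite divr_ge0 ?ler0n.
have mf_le : m%:R * f <= m%:R - b%:R + a%:R by rewrite mf; lra.
have mf_gt0 : 0 < m%:R * f by rewrite mulr_gt0.
rewrite natrD ler_pdivrMr //.
have -> : a%:R / m%:R * f^-1 * (s0%:R + s1%:R) = a%:R * (s0%:R + s1%:R) / (m%:R * f).
  by field; rewrite (gt_eqF f_gt0) (gt_eqF m_gt0').
rewrite ler_pdivlMr //.
have := ler_wpM2l (ler0n R s1) mf_le.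
nra.
Qed.

Lemma switching_ratio_lower (R : realFieldType) (s0 s1 a m b : nat) (B : R) :
  (0 < s0 + s1)%N -> (s0 * (a * m) <= s1 * (m * m) + s0 * (a * b))%N -> b%:R <= B ->
  a%:R / m%:R * ((1 - B / m%:R) * (1 + a%:R / m%:R)^-1) <= s1%:R / (s0 + s1)%:R.
Proof.
move=> s_gt0 count_le le_bB.
have s_gt0' : 0 < s0%:R + s1%:R :> R by rewrite -natrD ltr0n.
have ratio_ge0 : 0 <= s1%:R / (s0 + s1)%:R :> R by rewrite divr_ge0 ?ler0n.
have [m0 | m_pos] := posnP m; first by rewrite m0 invr0 !mulr0 !mul0r.
have m_gt0' : 0 < m%:R :> R by rewrite ltr0n.
set C := a%:R / m%:R; set w := 1 - B / m%:R.
have C_ge0 : 0 <= C by rewrite divr_ge0 ?ler0n.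
have [w_le0 | w_gt0] := lerP w 0.
  apply: le_trans ratio_ge0; rewrite mulr_ge0_le0 // mulr_le0_ge0 // invr_ge0; lra.
have {}count_le : s0%:R * (a%:R * m%:R) <= s1%:R * (m%:R * m%:R) + s0%:R * (a%:R * b%:R) :> R.
  by rewrite -!natrM -natrD ler_nat.
have switched_le : s0%:R * C * w <= s1%:R.
  have le_bmBm : b%:R / m%:R <= B / m%:R by rewrite ler_pM2r ?invr_gt0.
  have : s0%:R * C * (1 - b%:R / m%:R) <= s1%:R.
    have -> : s0%:R * C * (1 - b%:R / m%:R) =
        (s0%:R * (a%:R * m%:R) - s0%:R * (a%:R * b%:R)) / (m%:R * m%:R).
      by rewrite /C; field; rewrite gt_eqF.
    by rewrite ler_pdivrMr ?mulr_gt0 //; lra.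
  have : 0 <= s0%:R * C by rewrite mulr_ge0 ?ler0n.
  rewrite /w; nra.
rewrite natrD ler_pdivlMr //.
have -> : C * (w * (1 + C)^-1) * (s0%:R + s1%:R) = C * w * (s0%:R + s1%:R) / (1 + C).
  by field; rewrite gt_eqF //; lra.
rewrite ler_pdivrMr; last by lra.
have B_ge0 : 0 <= B by apply: le_trans le_bB; rewrite ler0n.
have w_le1 : w <= 1 by rewrite /w; have := divr_ge0 B_ge0 (ltW m_gt0'); lra.
have : C * w * s1%:R <= C * s1%:R by rewrite -mulrA ler_wpM2l // ler_piMl ?ler0n.
nra.
Qed.

Lemma natr_Mfree (R : realFieldType) n (d : 'I_n -> nat) (H1 H2 : {set {set 'I_n}}) :
  cond_event d H1 H2 != set0 -> (Mfree d H1)%:R = (sumd d)%:R - 2 * (nedges H1)%:R :> R.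
Proof. by move=> Sne; rewrite natrB ?(double_nedges_le_sumd Sne) // natrM. Qed.

Theorem theorem1p1 (R : realFieldType) (n : nat) (d : 'I_n -> nat)
    (H1 H2 : {set {set 'I_n}}) (u v : 'I_n) :
  graphical d ->
  simple_graph H1 -> simple_graph H2 -> [disjoint H1 & H2] ->
  (forall i, (deg H1 i <= d i)%N) ->
  u != v -> [set u; v] \notin H1 :|: H2 ->
  cond_event d H1 H2 != set0 ->
  let P : R := cond_prob_edge R d H1 H2 u v in
  let Mr : R := (sumd d)%:R - 2 * (nedges H1)%:R in
  let Dl : R := (maxd d)%:R in
  let J : R := (Jd d)%:R in
  let C : R := (d u - deg H1 u)%:R * (d v - deg H1 v)%:R / Mr in
  let fden : R := 1 - (3 * J + Dl * (8 + (deg H2 u)%:R + (deg H2 v)%:R)) / Mr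
                    - 2 * (nedges H2)%:R * Dl ^+ 2 / Mr ^+ 2 + C in
  let g : R := (1 - (2 * J + 6 * Dl + 2 * (maxdeg H2)%:R * Dl) / Mr) * (1 + C)^-1 in
  (0 < fden -> P <= C * fden^-1) /\ C * g <= P.
Proof.
(* graphical d, the simplicity of H1, the disjointness of H1 and H2 and d^{H1} <= d all follow
   from the conditioning event being nonempty. *)
move=> _ _ _ _ _ neq_uv uv_notin_H Sne /=.
have [uvH1 uvH2] : [set u; v] \notin H1 /\ [set u; v] \notin H2.
  by apply/andP; rewrite -negb_or -in_setU.
have S_gt0 : (0 < #|S0 d H1 H2 u v| + #|S1 d H1 H2 u v|)%N.
  by rewrite -(card_S d H1 H2 u v) card_gt0.
rewrite /cond_prob_edge -(natrM R (d u - deg H1 u)) -(natr_Mfree R Sne) (card_S d H1 H2 u v).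
split=> [fden_gt0 | ].
  apply: (switching_ratio_upper S_gt0 (Mfree_gt0 uvH1) (count_S1 d H2 neq_uv uvH1)) => //.
    rewrite /blocked_bound !natrD !natrM.
    have := ler0n R (Jd d); have := ler0n R (maxd d); have := ler0n R (deg H2 u).
    have := ler0n R (deg H2 v); nra.
  by rewrite !mulr_ge0 ?exprn_ge0 ?ler0n.
apply: (switching_ratio_lower S_gt0 (count_S0 d H1 neq_uv uvH2)).
rewrite /max_blocked_bound !natrD !natrM.
have := ler0n R (Jd d); have := ler0n R (maxd d); lra.
Qed.
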